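(* Let $b\ge2$, $\alpha_1,\alpha_2>0$, and let $y\in[0,1)$ be a $b$-adic rational number. Then the scaling function of the pair $(L_{\alpha_1}^b,L_{\alpha_2}^{b,y})$, based on second-order oscillations, is $$\zeta(r_1,r_2)=\begin{cases}\alpha_1r_1+\alpha_2r_2, & \text{if } 1-\alpha_1r_1-\alpha_2r_2\ge0,\\ 1, & \text{if } 1-\alpha_1r_1-\alpha_2r_2<0.\end{cases}$$
   Context: The saw-tooth function is $\{x\}=x-\lfloor x\rfloor-\frac12$ if $x\notin\mathbb{Z}$ and $\{x\}=0$ if $x\in\mathbb{Z}$. For $\alpha>0$ the Lévy function is $L_\alpha^b(x)=\sum_{i\geq1}\{b^ix\}\,b^{-\alpha i}$ and $L_\alpha^{b,y}(x)=L_\alpha^b(x-y)$. $b$-adic grid: $\lambda=\lambda(j,k)=[kb^{-j},(k+1)b^{-j})$, $3\lambda=[(k-1)b^{-j},(k+2)b^{-j})$, $\Lambda_j$ the set of the $b^j$ such intervals contained in $[0,1)$. Second-order difference $\Delta_f^2(x,h)=f(x+2h)-2f(x+h)+f(x)$; oscillation $d_\lambda(f)=\sup\{|\Delta_f^2(x,h)|: x,x+2h\in3\lambda\}$; $d_\lambda^{(1)}=d_\lambda(L_{\alpha_1}^b)$, $d_\lambda^{(2)}=d_\lambda(L_{\alpha_2}^{b,y})$. Structure function $S(r,j)=b^{-j}\sum_{\lambda\in\Lambda_j}(d_\lambda^{(1)})^{r_1}(d_\lambda^{(2)})^{r_2}$, scaling function $\zeta(r)=\liminf_{j\to\infty}\frac{\log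 S(r,j)}{\log b^{-j}}$. *)

From Stdlib Require Import Reals.
From Coquelicot Require Import Coquelicot.
Open Scope R_scope.

Definition saw (x : R) : R :=
  let n := IZR (Int_part x) in
  if Req_EM_T x n then 0 else x - n - 1/2.

Definition levy (b : nat) (alpha x : R) : R :=
  Series (fun n : nat =>
    saw ((INR b) ^ (S n) * x) * Rpower (INR b) (- alpha * INR (S n))).

Definition levy_shift (b : nat) (alpha y x : R) : R := levy b alpha (x - y).

Definition delta2 (f : R -> R) (x h : R) : R := f (x + 2 * h) - 2 * f (x + h) + f x.

Definition in3lambda (b j : nat) (k : nat) (x : R) : Prop :=
  (INR k - 1) / (INR b) ^ j <= x /\ x < (INR k + 2) / (INR b) ^ j.

Definition osc (f : R -> R) (b j k : nat) : R :=
  real (Lub_Rbar (fun z => exists x h,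
          in3lambda b j k x /\ in3lambda b j k (x + 2 * h) /\
          z = Rabs (delta2 f x h))).

Definition struct_fun (b : nat) (a1 a2 y r1 r2 : R) (j : nat) : R :=
  / (INR b) ^ j *
  sum_n (fun k : nat =>
           Rpower (osc (levy b a1) b j k) r1 *
           Rpower (osc (levy_shift b a2 y) b j k) r2)
        (b ^ j - 1)%nat.

Definition scaling_fun (b : nat) (a1 a2 y r1 r2 : R) : Rbar :=
  LimInf_seq (fun j : nat => ln (struct_fun b a1 a2 y r1 r2 j) / ln (/ (INR b) ^ j)).

Definition b_adic (b : nat) (y : R) : Prop :=
  exists (m : nat) (k : Z), y = IZR k / (INR b) ^ m.

From Stdlib Require Import Reals Lra Lia ZArith Psatz.
From Coquelicot Require Import Coquelicot.
Open Scope R_scope.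

(* For the b-adic interval lambda(j,k), let m(k) <= j be the least i such that
   [[(k-1) b^-j, (k+1) b^-j]] contains a point of b^-i Z.  The saw-tooth terms of index
   < m(k) are affine on 3 lambda, so the second difference kills them and
   d_lambda(L_alpha) is comparable to b^(-alpha m(k)); the lower bound is attained at the
   b-adic point of level m(k) with a tiny step.  Translating by a b-adic y of level m0
   changes m(k) by at most m0, so with s = alpha1 r1 + alpha2 r2 the structure function
   is comparable to b^-j sum_k b^(-s m(k)).  At most 3 b^i indices have m(k) <= i, while
   m(0) = 0 and a proportion b^-2 of the indices have m(k) >= j - 1; hence the sum is
   b^(j max(0, 1 - s)) up to a factor polynomial in j, and zeta = 1 - max(0, 1 - s). *)

(** * Finite sums *)

(* [sumR f n] has the [n] terms [f 0], ..., [f (n - 1)]; Coquelicot's [sum_n f n] has [n + 1]. *)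
Fixpoint sumR (f : nat -> R) (n : nat) : R :=
  match n with O => 0 | S n' => sumR f n' + f n' end.

Lemma sumR_ext f g n : (forall i, (i < n)%nat -> f i = g i) -> sumR f n = sumR g n.
Proof.
  induction n as [|n IH]; simpl; intros H; auto.
  rewrite IH, H; auto; intros; apply H; lia.
Qed.

Lemma sumR_le f g n : (forall i, (i < n)%nat -> f i <= g i) -> sumR f n <= sumR g n.
Proof.
  induction n as [|n IH]; simpl; intros H; [lra|].
  assert (sumR f n <= sumR g n) by (apply IH; intros; apply H; lia).
  specialize (H n ltac:(lia)); lra.
Qed.

Lemma sumR_nonneg f n : (forall i, (i < n)%nat -> 0 <= f i) -> 0 <= sumR f n.
Proof.
  induction n as [|n IH]; simpl; intros H; [lra|].
  assert (0 <= sumR f n) by (apply IH; intros; apply H; lia).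
  specialize (H n ltac:(lia)); lra.
Qed.

Lemma sumR_term_le f n i :
  (forall i, (i < n)%nat -> 0 <= f i) -> (i < n)%nat -> f i <= sumR f n.
Proof.
  induction n as [|n IH]; simpl; intros H Hi; [lia|].
  destruct (Nat.eq_dec i n) as [->|Hne].
  - assert (0 <= sumR f n) by (apply sumR_nonneg; intros; apply H; lia). lra.
  - assert (f i <= sumR f n) by (apply IH; [intros; apply H|]; lia).
    specialize (H n ltac:(lia)); lra.
Qed.

Lemma sumR_plus f g n : sumR (fun i => f i + g i) n = sumR f n + sumR g n.
Proof. induction n as [|n IH]; simpl; [|rewrite IH]; lra. Qed.

Lemma sumR_scal_l c f n : sumR (fun i => c * f i) n = c * sumR f n.
Proof. induction n as [|n IH]; simpl; [|rewrite IH]; lra. Qed.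

Lemma sumR_const c n : sumR (fun _ => c) n = INR n * c.
Proof. induction n as [|n IH]; simpl sumR; [simpl|rewrite IH, S_INR]; lra. Qed.

Lemma sumR_add_range f n m : sumR f (n + m) = sumR f n + sumR (fun v => f (n + v)%nat) m.
Proof.
  induction m as [|m IH]; simpl; [rewrite Nat.add_0_r; lra|].
  rewrite Nat.add_succ_r; simpl; rewrite IH; lra.
Qed.

Lemma sumR_blocks f a d :
  sumR f (a * d) = sumR (fun u => sumR (fun v => f (u * d + v)%nat) d) a.
Proof.
  induction a as [|a IH]; simpl; auto.
  replace (d + a * d)%nat with (a * d + d)%nat by lia.
  now rewrite sumR_add_range, IH.
Qed.

Lemma sumR_comm (F : nat -> nat -> R) n m :
  sumR (fun k => sumR (F k) n) m = sumR (fun i => sumR (fun k => F k i) m) n.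
Proof.
  induction m as [|m IH]; simpl.
  - induction n as [|n IH]; simpl; [|rewrite <- IH]; lra.
  - rewrite IH, <- sumR_plus; auto.
Qed.

Lemma sum_n_sumR f N : (0 < N)%nat -> sum_n f (N - 1) = sumR f N.
Proof.
  intros H; destruct N as [|N]; [lia|].
  replace (S N - 1)%nat with N by lia; rewrite sum_n_Reals; clear H.
  induction N as [|N IH]; simpl in *; [|rewrite IH]; lra.
Qed.

Definition indicator (P : bool) : R := if P then 1 else 0.

Lemma indicator_nonneg P : 0 <= indicator P.
Proof. destruct P; simpl; lra. Qed.

Lemma sumR_indicator_eq_le1 c n : sumR (fun v => indicator (Nat.eqb v c)) n <= 1.
Proof.
  enough (E : sumR (fun v => indicator (Nat.eqb v c)) n = indicator (Nat.ltb c n))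
    by (rewrite E; destruct (Nat.ltb c n); simpl; lra).
  induction n as [|n IH]; simpl; auto; rewrite IH.
  destruct (Nat.eqb_spec n c), (Nat.ltb_spec c n), (Nat.ltb_spec c (S n)); simpl; lia || lra.
Qed.

(** * Levels of grid intervals *)

Fixpoint first_true (P : nat -> bool) (n : nat) : nat :=
  match n with
  | O => O
  | S n' => if P O then O else S (first_true (fun i => P (S i)) n')
  end.

Lemma first_true_spec n P : P n = true ->
  P (first_true P n) = true /\ (first_true P n <= n)%nat /\
  (forall i, (i < first_true P n)%nat -> P i = false).
Proof.
  revert P; induction n as [|n IH]; intros P H; simpl.
  - repeat split; auto; intros; lia.
  - destruct (P O) eqn:E0; [repeat split; auto; intros; lia|].
    destruct (IH (fun i => P (S i)) H) as (H1 & H2 & H3).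
    repeat split; auto; [lia|]. intros [|i] Hi; auto. apply H3; lia.
Qed.

Definition dvdb (d x : Z) : bool := Z.eqb (x mod d) 0.

Lemma dvdb_spec d x : d <> 0%Z -> dvdb d x = true <-> (d | x)%Z.
Proof. intros H; unfold dvdb; rewrite Z.eqb_eq; now apply Z.mod_divide. Qed.

(* [near_grid b j k i]: the interval [[(k-1) b^-j, (k+1) b^-j]] contains a point of
   [b^-i Z].  The [level] of [k] is the least such [i]. *)
Definition near_grid (b j : nat) (k : Z) (i : nat) : bool :=
  let d := Z.of_nat (b ^ (j - i)) in (dvdb d (k - 1) || dvdb d k || dvdb d (k + 1))%bool.

Definition level (b j : nat) (k : Z) : nat := first_true (near_grid b j k) j.

Lemma Zpow_pos b n : (1 <= b)%nat -> (0 < Z.of_nat (b ^ n))%Z.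
Proof. intros H; pose proof (Nat.pow_nonzero b n ltac:(lia)); lia. Qed.

Lemma Zpow_divide b n m : (n <= m)%nat -> (Z.of_nat (b ^ n) | Z.of_nat (b ^ m))%Z.
Proof.
  intros H; replace m with (n + (m - n))%nat by lia.
  rewrite Nat.pow_add_r, Nat2Z.inj_mul; apply Z.divide_factor_l.
Qed.

Lemma near_grid_spec b j k i : (1 <= b)%nat ->
  near_grid b j k i = true <->
  exists e, (-1 <= e <= 1)%Z /\ (Z.of_nat (b ^ (j - i)) | k + e)%Z.
Proof.
  intros Hb; pose proof (Zpow_pos b (j - i) Hb) as Hd.
  unfold near_grid; rewrite !Bool.orb_true_iff, !dvdb_spec by lia; split.
  - intros [[H|H]|H]; [exists (-1)%Z | exists 0%Z | exists 1%Z];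
      (split; [lia|]); now rewrite ?Z.add_0_r, <- ?Z.sub_opp_r.
  - intros (e & He & H).
    assert (e = -1 \/ e = 0 \/ e = 1)%Z as [-> | [-> | ->]] by lia;
      rewrite ?Z.add_0_r, <- ?Z.sub_opp_r in H; auto.
Qed.

Lemma near_grid_top b j k : (1 <= b)%nat -> near_grid b j k j = true.
Proof.
  intros Hb; apply near_grid_spec; auto; exists 0%Z.
  rewrite Nat.sub_diag; split; [lia | apply Z.divide_1_l].
Qed.

Lemma level_spec b j k : (1 <= b)%nat ->
  near_grid b j k (level b j k) = true /\ (level b j k <= j)%nat /\
  (forall i, (i < level b j k)%nat -> near_grid b j k i = false).
Proof. intros Hb; apply first_true_spec, near_grid_top, Hb. Qed.

Lemma near_grid_mono b j k i i' : (1 <= b)%nat -> (i <= i')%nat ->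
  near_grid b j k i = true -> near_grid b j k i' = true.
Proof.
  intros Hb Hi; rewrite !near_grid_spec by auto; intros (e & He & H).
  exists e; split; auto; eapply Z.divide_trans; [apply Zpow_divide | apply H]; lia.
Qed.

Lemma near_grid_translate b j m0 k c i : (1 <= b)%nat -> (m0 <= i)%nat ->
  (Z.of_nat (b ^ (j - m0)) | c)%Z -> near_grid b j k i = near_grid b j (k - c) i.
Proof.
  intros Hb Hi Hc.
  assert (Hd : (Z.of_nat (b ^ (j - i)) | c)%Z)
    by (eapply Z.divide_trans; [apply Zpow_divide | apply Hc]; lia).
  destruct Hd as [t Ht]; pose proof (Zpow_pos b (j - i) Hb).
  unfold near_grid, dvdb; rewrite Ht.
  replace (k - t * Z.of_nat (b ^ (j - i)) - 1)%Z
    with (k - 1 + - t * Z.of_nat (b ^ (j - i)))%Z by ring.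
  replace (k - t * Z.of_nat (b ^ (j - i)) + 1)%Z
    with (k + 1 + - t * Z.of_nat (b ^ (j - i)))%Z by ring.
  replace (k - t * Z.of_nat (b ^ (j - i)))%Z
    with (k + - t * Z.of_nat (b ^ (j - i)))%Z by ring.
  rewrite !Z.mod_add by lia; auto.
Qed.

Lemma level_translate_le b j m0 k c : (1 <= b)%nat -> (m0 <= j)%nat ->
  (Z.of_nat (b ^ (j - m0)) | c)%Z -> (level b j k <= level b j (k - c) + m0)%nat.
Proof.
  intros Hb Hj Hc.
  destruct (level_spec b j (k - c) Hb) as (H1 & H2 & _).
  destruct (level_spec b j k Hb) as (_ & _ & G3).
  set (i := Nat.max (level b j (k - c)) m0).
  assert (Hi : near_grid b j k i = true).
  { rewrite (near_grid_translate b j m0 k c) by (auto; unfold i; lia).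
    eapply near_grid_mono; [auto | | apply H1]; unfold i; lia. }
  destruct (Nat.le_gt_cases (level b j k) i) as [|Hlt]; [unfold i in *; lia|].
  rewrite G3 in Hi; [discriminate | auto].
Qed.

Lemma level_translate b j m0 k c : (1 <= b)%nat -> (m0 <= j)%nat ->
  (Z.of_nat (b ^ (j - m0)) | c)%Z ->
  (level b j k <= level b j (k - c) + m0)%nat /\ (level b j (k - c) <= level b j k + m0)%nat.
Proof.
  intros Hb Hj Hc; split; [now apply level_translate_le|].
  pose proof (level_translate_le b j m0 (k - c) (- c) Hb Hj) as H.
  rewrite Z.sub_opp_r, Z.sub_add in H; apply H, Z.divide_opp_r, Hc.
Qed.

Lemma level_0 b j : (1 <= b)%nat -> level b j 0 = 0%nat.
Proof.
  intros Hb; destruct (level_spec b j 0 Hb) as (_ & _ & H).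
  destruct (level b j 0) as [|m]; auto.
  assert (near_grid b j 0 0 = true)
    by (apply near_grid_spec; auto; exists 0%Z; split; [lia | apply Z.divide_0_r]).
  rewrite H in *; [discriminate | lia].
Qed.

Lemma level_large b j u : (2 <= b)%nat -> (2 <= j)%nat -> (u < b ^ (j - 2))%nat ->
  (j - 1 <= level b j (Z.of_nat (b ^ 2 * u + 2)))%nat.
Proof.
  intros Hb Hj Hu; set (k := Z.of_nat (b ^ 2 * u + 2)).
  destruct (level_spec b j k ltac:(lia)) as (H1 & _ & _).
  destruct (Nat.le_gt_cases (j - 1) (level b j k)) as [|Hlt]; auto; exfalso.
  apply near_grid_spec in H1 as (e & He & Hd); [|lia].
  assert (Hd2 : (Z.of_nat (b ^ 2) | k + e)%Z)
    by (eapply Z.divide_trans; [apply Zpow_divide | apply Hd]; lia).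
  assert (Hd3 : (Z.of_nat (b ^ 2) | 2 + e)%Z).
  { apply (Z.divide_add_cancel_r _ (Z.of_nat (b ^ 2) * Z.of_nat u)); [apply Z.divide_factor_l|].
    unfold k in Hd2; rewrite Nat2Z.inj_add, Nat2Z.inj_mul in Hd2.
    now replace (Z.of_nat (b ^ 2) * Z.of_nat u + (2 + e))%Z
      with (Z.of_nat (b ^ 2) * Z.of_nat u + Z.of_nat 2 + e)%Z
      by (change (Z.of_nat 2) with 2%Z; lia). }
  apply Z.divide_pos_le in Hd3; [|lia].
  assert (4 <= b ^ 2)%nat by (simpl; nia); lia.
Qed.

Lemma near_grid_block_residue b j i u v : (1 <= b)%nat ->
  (v < b ^ (j - i))%nat -> near_grid b j (Z.of_nat (u * b ^ (j - i) + v)) i = true ->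
  v = 0%nat \/ v = 1%nat \/ v = (b ^ (j - i) - 1)%nat.
Proof.
  intros Hb Hv H; apply near_grid_spec in H as (e & He & Hd); auto.
  set (d := (b ^ (j - i))%nat) in *.
  assert (Hd2 : (Z.of_nat d | Z.of_nat v + e)%Z).
  { apply (Z.divide_add_cancel_r _ (Z.of_nat u * Z.of_nat d)); [apply Z.divide_factor_r|].
    rewrite Nat2Z.inj_add, Nat2Z.inj_mul in Hd.
    now replace (Z.of_nat u * Z.of_nat d + (Z.of_nat v + e))%Z
      with (Z.of_nat u * Z.of_nat d + Z.of_nat v + e)%Z by lia. }
  destruct Hd2 as [t Ht].
  assert (t = 0 \/ t = 1 \/ t = -1)%Z by nia; nia.
Qed.

Lemma count_near_grid b j i : (2 <= b)%nat -> (i <= j)%nat ->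
  sumR (fun k => indicator (near_grid b j (Z.of_nat k) i)) (b ^ j) <= 3 * INR (b ^ i).
Proof.
  intros Hb Hij.
  replace (b ^ j)%nat with (b ^ i * b ^ (j - i))%nat
    by (rewrite <- Nat.pow_add_r; f_equal; lia).
  rewrite sumR_blocks; set (d := (b ^ (j - i))%nat).
  apply Rle_trans with (sumR (fun _ => 3) (b ^ i)); [|rewrite sumR_const; lra].
  apply sumR_le; intros u _.
  apply Rle_trans with (sumR (fun v => indicator (Nat.eqb v 0) + indicator (Nat.eqb v 1)
                                       + indicator (Nat.eqb v (d - 1))) d).
  - apply sumR_le; intros v Hv.
    destruct (near_grid b j (Z.of_nat (u * d + v)) i) eqn:E.
    + destruct (near_grid_block_residue b j i u v ltac:(lia) Hv E) as [-> | [-> | ->]];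
        rewrite Nat.eqb_refl; unfold indicator;
        repeat match goal with |- context [Nat.eqb ?x ?y] => destruct (Nat.eqb x y) end; lra.
    + simpl; pose proof (indicator_nonneg (Nat.eqb v 0));
        pose proof (indicator_nonneg (Nat.eqb v 1));
        pose proof (indicator_nonneg (Nat.eqb v (d - 1))); lra.
  - rewrite !sumR_plus.
    pose proof (sumR_indicator_eq_le1 0 d); pose proof (sumR_indicator_eq_le1 1 d);
      pose proof (sumR_indicator_eq_le1 (d - 1) d); lra.
Qed.

Lemma IZR_Zpow b n : IZR (Z.of_nat (b ^ n)) = INR b ^ n.
Proof. now rewrite <- INR_IZR_INZ, pow_INR. Qed.

Lemma INR_pow_pos b n : (1 <= b)%nat -> 0 < INR b ^ n.
Proof. intros H; apply pow_lt, lt_0_INR; lia. Qed.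

Lemma grid_refine b i j N : (1 <= b)%nat -> (i <= j)%nat ->
  IZR N / INR b ^ i = IZR (N * Z.of_nat (b ^ (j - i))) / INR b ^ j.
Proof.
  intros Hb Hij; rewrite mult_IZR, IZR_Zpow.
  replace j with (i + (j - i))%nat at 2 by lia; rewrite pow_add.
  pose proof (INR_pow_pos b i Hb); pose proof (INR_pow_pos b (j - i) Hb); field; lra.
Qed.

Lemma near_grid_point b j k i : (1 <= b)%nat -> (i <= j)%nat -> near_grid b j k i = true ->
  exists N, (IZR k - 1) / INR b ^ j <= IZR N / INR b ^ i <= (IZR k + 1) / INR b ^ j.
Proof.
  intros Hb Hij H; apply near_grid_spec in H as (e & He & N & HN); auto.
  exists N; rewrite (grid_refine b i j N Hb Hij), <- HN, plus_IZR.
  pose proof (Rinv_0_lt_compat _ (INR_pow_pos b j Hb)).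
  assert (-1 <= IZR e <= 1) by (split; apply IZR_le; lia).
  unfold Rdiv; split; apply Rmult_le_compat_r; lra.
Qed.

Lemma near_grid_false_no_point b j k i N : (1 <= b)%nat -> (i <= j)%nat ->
  near_grid b j k i = false ->
  ~ ((IZR k - 1) / INR b ^ j <= IZR N / INR b ^ i < (IZR k + 2) / INR b ^ j).
Proof.
  intros Hb Hij H [H1 H2]; rewrite (grid_refine b i j N Hb Hij) in H1, H2.
  pose proof (INR_pow_pos b j Hb).
  set (M := (N * Z.of_nat (b ^ (j - i)))%Z) in *.
  apply Rmult_le_reg_r in H1; [|now apply Rinv_0_lt_compat].
  apply Rmult_lt_reg_r in H2; [|now apply Rinv_0_lt_compat].
  assert (k - 1 <= M)%Z by (apply le_IZR; rewrite minus_IZR; simpl; lra).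
  assert (M < k + 2)%Z by (apply lt_IZR; rewrite plus_IZR; simpl; lra).
  enough (near_grid b j k i = true) by congruence.
  apply near_grid_spec; auto; exists (M - k)%Z; split; [lia|].
  replace (k + (M - k))%Z with M by ring; apply Z.divide_factor_r.
Qed.

(** * The saw-tooth function *)

Lemma Int_part_unique x M : IZR M <= x < IZR M + 1 -> Int_part x = M.
Proof.
  intros [H1 H2]; destruct (base_Int_part x) as [G1 G2].
  assert (Int_part x < M + 1)%Z by (apply lt_IZR; rewrite plus_IZR; simpl; lra).
  assert (M < Int_part x + 1)%Z by (apply lt_IZR; rewrite plus_IZR; simpl; lra).
  lia.
Qed.

Lemma saw_IZR N : saw (IZR N) = 0.
Proof.
  unfold saw; rewrite (Int_part_unique (IZR N) N) by lra.
  destruct Req_EM_T; [auto | lra].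
Qed.

Lemma saw_affine x M : IZR M < x < IZR M + 1 -> saw x = x - IZR M - 1/2.
Proof.
  intros H; unfold saw; rewrite (Int_part_unique x M) by lra.
  destruct Req_EM_T; lra.
Qed.

Lemma saw_abs_le x : Rabs (saw x) <= 1/2.
Proof.
  unfold saw; destruct (base_Int_part x); destruct Req_EM_T.
  - rewrite Rabs_R0; lra.
  - apply Rabs_le; lra.
Qed.

Lemma delta2_saw_abs_le x h : Rabs (delta2 saw x h) <= 2.
Proof.
  unfold delta2; pose proof (saw_abs_le (x + 2 * h)); pose proof (saw_abs_le (x + h));
    pose proof (saw_abs_le x).
  repeat match goal with H : Rabs _ <= _ |- _ => apply Rabs_le_between in H end.
  apply Rabs_le; lra.
Qed.

Lemma delta2_saw_no_integer u v x h : (forall N, ~ (u <= IZR N < v)) ->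
  u <= x < v -> u <= x + h < v -> u <= x + 2 * h < v -> delta2 saw x h = 0.
Proof.
  intros HN H1 H2 H3; destruct (base_Int_part u) as [G1 G2]; set (M := Int_part u) in *.
  assert (IZR M <> u) by (intros E; apply (HN M); lra).
  assert (~ IZR (M + 1) < v) by (intros E; apply (HN (M + 1)%Z); rewrite plus_IZR in *; lra).
  rewrite plus_IZR in *; unfold delta2.
  rewrite (saw_affine x M), (saw_affine (x + h) M), (saw_affine (x + 2 * h) M) by lra; ring.
Qed.

Lemma delta2_saw_IZR N d : 0 < d -> 2 * d < 1 -> delta2 saw (IZR N) d = 1/2.
Proof.
  intros H1 H2; unfold delta2.
  rewrite saw_IZR, (saw_affine (IZR N + d) N), (saw_affine (IZR N + 2 * d) N) by lra; ring.
Qed.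

(** * Oscillations of the Lévy function *)

Lemma exp_le x y : x <= y -> exp x <= exp y.
Proof. intros [H | ->]; [left; now apply exp_increasing | lra]. Qed.

Lemma ln_INR_pos b : (2 <= b)%nat -> 0 < ln (INR b).
Proof.
  intros H; rewrite <- ln_1; apply ln_increasing; [lra|].
  replace 1 with (INR 1) by auto; apply lt_INR; lia.
Qed.

Lemma INR_pow_exp b n : (2 <= b)%nat -> INR (b ^ n) = exp (ln (INR b) * INR n).
Proof.
  intros Hb; rewrite pow_INR, <- (exp_ln (INR b ^ n)) by (apply INR_pow_pos; lia).
  rewrite ln_pow by (apply lt_0_INR; lia); f_equal; ring.
Qed.

Definition decay (b : nat) (a : R) : R := Rpower (INR b) (- a).

Lemma decay_bounds b a : (2 <= b)%nat -> 0 < a -> 0 < decay b a < 1.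
Proof.
  intros Hb Ha; unfold decay, Rpower; split; [apply exp_pos|].
  rewrite <- exp_0; apply exp_increasing; pose proof (ln_INR_pos b Hb); nra.
Qed.

Lemma ln_decay b a : ln (decay b a) = - a * ln (INR b).
Proof. unfold decay, Rpower; now rewrite ln_exp. Qed.

Lemma Rpower_decay b a n : (2 <= b)%nat -> Rpower (INR b) (- a * INR n) = decay b a ^ n.
Proof.
  intros Hb; unfold decay; rewrite <- Rpower_pow by (unfold Rpower; apply exp_pos).
  now rewrite Rpower_mult.
Qed.

Lemma pow_antimono q n m : 0 <= q <= 1 -> (n <= m)%nat -> q ^ m <= q ^ n.
Proof.
  intros Hq Hnm; replace m with (n + (m - n))%nat by lia; rewrite pow_add.
  pose proof (pow_le q n ltac:(lra)); pose proof (pow_incr q 1 (m - n) Hq).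
  rewrite pow1 in *; pose proof (pow_le q (m - n) ltac:(lra)); nra.
Qed.

Lemma ex_series_geom_dominated (a : nat -> R) M q : 0 <= q < 1 ->
  (forall n, Rabs (a n) <= M * q ^ n) -> ex_series a.
Proof.
  intros Hq H; apply ex_series_Rabs.
  apply (ex_series_le (fun n => Rabs (a n)) (fun n => M * q ^ n)).
  - intros n; change (norm (Rabs (a n))) with (Rabs (Rabs (a n))); now rewrite Rabs_Rabsolu.
  - exists (M * / (1 - q)); apply (is_series_scal_l M (fun n => q ^ n)), is_series_geom.
    rewrite Rabs_pos_eq; lra.
Qed.

Lemma Series_split (a : nat -> R) N : ex_series a ->
  Series a = sumR a N + Series (fun k => a (N + k)%nat).
Proof.
  intros Ha; destruct N as [|N].
  - simpl; rewrite Rplus_0_l; now apply Series_ext.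
  - rewrite (Series_incr_n a (S N)) by (auto; lia); simpl pred; f_equal.
    clear; induction N as [|N IH]; simpl in *; [|rewrite IH]; lra.
Qed.

Lemma Series_tail_abs_le (a : nat -> R) M q N : 0 <= q < 1 ->
  (forall n, Rabs (a n) <= M * q ^ n) ->
  Rabs (Series (fun k => a (N + k)%nat)) <= M * q ^ N / (1 - q).
Proof.
  intros Hq H.
  assert (HB : forall k, Rabs (a (N + k)%nat) <= M * q ^ N * q ^ k)
    by (intros k; rewrite Rmult_assoc, <- pow_add; auto).
  assert (Hg : is_series (fun k => M * q ^ N * q ^ k) (M * q ^ N * / (1 - q))).
  { apply (is_series_scal_l (M * q ^ N) (fun n => q ^ n)), is_series_geom.
    rewrite Rabs_pos_eq; lra. }
  eapply Rle_trans.
  - apply Series_Rabs, (ex_series_geom_dominated _ (M * q ^ N) q); auto.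
    intros k; rewrite Rabs_Rabsolu; auto.
  - replace (M * q ^ N / (1 - q)) with (Series (fun k => M * q ^ N * q ^ k))
      by now rewrite (is_series_unique _ _ Hg).
    apply Series_le; [|eexists; eauto].
    intros n; split; [apply Rabs_pos | auto].
Qed.

Lemma levy_delta2 b a x h : (2 <= b)%nat -> 0 < a ->
  delta2 (levy b a) x h =
  Series (fun n => delta2 saw (INR b ^ S n * x) (INR b ^ S n * h) * decay b a ^ S n).
Proof.
  intros Hb Ha; pose proof (decay_bounds b a Hb Ha) as Hq.
  set (q := decay b a) in *.
  assert (Hterm : forall z n, Rabs (saw (INR b ^ S n * z) * q ^ S n) <= (q / 2) * q ^ n).
  { intros z n; rewrite Rabs_mult, (Rabs_pos_eq (q ^ S n)) by (apply pow_le; lra).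
    replace (q / 2 * q ^ n) with (1 / 2 * q ^ S n) by (simpl; field).
    apply Rmult_le_compat_r; [apply pow_le; lra | apply saw_abs_le]. }
  assert (Hex : forall z, ex_series (fun n => saw (INR b ^ S n * z) * q ^ S n))
    by (intros z; apply (ex_series_geom_dominated _ (q / 2) q); [lra | auto]).
  unfold delta2 at 1, levy.
  rewrite !(Series_ext (fun n => _ * Rpower _ _) (fun n => saw (INR b ^ S n * _) * q ^ S n))
    by (intros; now rewrite Rpower_decay).
  rewrite <- Series_scal_l, <- Series_minus, <- Series_plus; auto.
  - apply Series_ext; intros n; unfold delta2.
    replace (INR b ^ S n * (x + 2 * h)) with (INR b ^ S n * x + 2 * (INR b ^ S n * h)) by ring.
    replace (INR b ^ S n * (x + h)) with (INR b ^ S n * x + INR b ^ S n * h) by ring; ring.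
  - apply (ex_series_geom_dominated _ (3 * q / 2) q); [lra|]; intros n.
    pose proof (Hterm (x + 2 * h) n); pose proof (Hterm (x + h) n).
    repeat match goal with H : Rabs _ <= _ |- _ => apply Rabs_le_between in H end.
    apply Rabs_le; lra.
  - apply (ex_series_geom_dominated _ q q); [lra|]; intros n.
    pose proof (Hterm (x + h) n); apply Rabs_le_between in H; apply Rabs_le; lra.
Qed.

Definition in_window (b j : nat) (k : Z) (x : R) : Prop :=
  (IZR k - 1) / INR b ^ j <= x < (IZR k + 2) / INR b ^ j.

Lemma in_window_scaled b j k i x : (1 <= b)%nat -> in_window b j k x ->
  INR b ^ i * ((IZR k - 1) / INR b ^ j) <= INR b ^ i * x < INR b ^ i * ((IZR k + 2) / INR b ^ j).
Proof.
  intros Hb [H1 H2]; pose proof (INR_pow_pos b i Hb).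
  split; [apply Rmult_le_compat_l | apply Rmult_lt_compat_l]; lra.
Qed.

Lemma delta2_saw_below_level b j k i x h : (1 <= b)%nat -> (i <= j)%nat ->
  near_grid b j k i = false -> in_window b j k x -> in_window b j k (x + 2 * h) ->
  delta2 saw (INR b ^ i * x) (INR b ^ i * h) = 0.
Proof.
  intros Hb Hij Hi Hx Hx2; pose proof (INR_pow_pos b i Hb).
  assert (Hx1 : in_window b j k (x + h)) by (unfold in_window in *; lra).
  apply (delta2_saw_no_integer (INR b ^ i * ((IZR k - 1) / INR b ^ j))
                               (INR b ^ i * ((IZR k + 2) / INR b ^ j))).
  - intros N HN; apply (near_grid_false_no_point b j k i N Hb Hij Hi).
    replace (IZR N / INR b ^ i) with (/ INR b ^ i * IZR N) by (field; lra).
    split; [apply (Rmult_le_reg_l (INR b ^ i)) | apply (Rmult_lt_reg_l (INR b ^ i))];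
      auto; rewrite <- Rmult_assoc, Rinv_r, Rmult_1_l by lra; lra.
  - now apply in_window_scaled.
  - rewrite <- Rmult_plus_distr_l; now apply in_window_scaled.
  - replace (INR b ^ i * x + 2 * (INR b ^ i * h)) with (INR b ^ i * (x + 2 * h)) by ring.
    now apply in_window_scaled.
Qed.

Lemma levy_term_abs_le b a x h n : (2 <= b)%nat -> 0 < a ->
  Rabs (delta2 saw (INR b ^ S n * x) (INR b ^ S n * h) * decay b a ^ S n)
  <= 2 * decay b a * decay b a ^ n.
Proof.
  intros Hb Ha; pose proof (decay_bounds b a Hb Ha).
  rewrite Rabs_mult, (Rabs_pos_eq (decay b a ^ S n)) by (apply pow_le; lra).
  rewrite Rmult_assoc, tech_pow_Rmult.
  apply Rmult_le_compat_r; [apply pow_le; lra | apply delta2_saw_abs_le].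
Qed.

Lemma delta2_levy_upper b a j k x h : (2 <= b)%nat -> 0 < a ->
  in_window b j k x -> in_window b j k (x + 2 * h) ->
  Rabs (delta2 (levy b a) x h) <= 2 * decay b a ^ level b j k / (1 - decay b a).
Proof.
  intros Hb Ha Hx Hx2; pose proof (decay_bounds b a Hb Ha) as Hq.
  destruct (level_spec b j k ltac:(lia)) as (_ & Hmj & Hbelow).
  rewrite levy_delta2 by auto.
  set (q := decay b a) in *; set (m := level b j k) in *.
  set (an := fun n => delta2 saw (INR b ^ S n * x) (INR b ^ S n * h) * q ^ S n).
  assert (Han : forall n, Rabs (an n) <= 2 * q * q ^ n) by (intros; now apply levy_term_abs_le).
  rewrite (Series_split an (m - 1))
    by (apply (ex_series_geom_dominated _ (2 * q) q); [lra | auto]).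
  rewrite (sumR_ext an (fun _ => 0)), sumR_const, Rmult_0_r, Rplus_0_l.
  - eapply Rle_trans; [apply (Series_tail_abs_le an (2 * q) q); auto; lra|].
    apply Rmult_le_compat_r; [left; apply Rinv_0_lt_compat; lra|].
    rewrite Rmult_assoc; apply Rmult_le_compat_l; [lra|].
    destruct m as [|m]; simpl; [lra|]; rewrite Nat.sub_0_r; lra.
  - intros i Hi; unfold an.
    rewrite (delta2_saw_below_level b j k (S i)); auto; [ring | lia | lia | apply Hbelow; lia].
Qed.

Lemma delta2_saw_grid_point b m n N h : (1 <= b)%nat -> (m <= n)%nat ->
  0 < h -> 2 * (INR b ^ n * h) < 1 ->
  delta2 saw (INR b ^ n * (IZR N / INR b ^ m)) (INR b ^ n * h) = 1/2.
Proof.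
  intros Hb Hmn Hh Hh2; pose proof (INR_pow_pos b n Hb).
  rewrite (grid_refine b m n N Hb Hmn).
  replace (INR b ^ n * (IZR _ / INR b ^ n)) with (IZR (N * Z.of_nat (b ^ (n - m))))
    by (field; lra).
  apply delta2_saw_IZR; [apply Rmult_lt_0_compat|]; lra.
Qed.

Lemma step_scaled_le b n T : (1 <= b)%nat -> (n <= T)%nat ->
  INR b ^ n * / (4 * INR b ^ T) <= / 4.
Proof.
  intros Hb Hn; pose proof (INR_pow_pos b n Hb); pose proof (INR_pow_pos b T Hb).
  assert (INR b ^ n <= INR b ^ T)
    by (apply Rle_pow; [replace 1 with (INR 1) by auto; apply le_INR|]; lia).
  replace (INR b ^ n * / (4 * INR b ^ T)) with (/ 4 * (INR b ^ n / INR b ^ T)) by (field; lra).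
  enough (INR b ^ n / INR b ^ T <= 1) by lra.
  apply (Rmult_le_reg_r (INR b ^ T)); [lra|].
  unfold Rdiv; rewrite Rmult_assoc, Rinv_l, Rmult_1_r, Rmult_1_l by lra; lra.
Qed.

Lemma sumR_head_lower q m T (an : nat -> R) : 0 < q < 1 -> (m <= T)%nat -> (1 <= T)%nat ->
  (forall n, (n < T)%nat -> an n = if Nat.leb m (S n) then q ^ S n / 2 else 0) ->
  q ^ S m / 2 <= sumR an T.
Proof.
  intros Hq HmT HT Han; eapply Rle_trans; [|apply (sumR_term_le an T (m - 1))].
  - rewrite Han by lia; destruct (Nat.leb_spec m (S (m - 1))); [|lia].
    apply Rmult_le_compat_r; [lra | apply pow_antimono; lra || lia].
  - intros n Hn; rewrite Han by auto.
    destruct (Nat.leb m (S n)); [pose proof (pow_le q (S n)) |]; lra.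
  - lia.
Qed.

Lemma geometric_tail_small q m j t : 0 < q < 1 -> (m <= j)%nat -> q ^ t < (1 - q) / 8 ->
  2 * q * q ^ (j + S t) / (1 - q) <= q ^ S m / 4.
Proof.
  intros Hq Hmj Ht.
  pose proof (pow_antimono q m j ltac:(lra) Hmj); pose proof (pow_le q t ltac:(lra)).
  pose proof (pow_le q j ltac:(lra)); pose proof (pow_le q (S m) ltac:(lra)).
  assert (q ^ j * q ^ t <= q ^ m * ((1 - q) / 8)) by nra.
  assert (HT : q ^ (j + S t) <= q ^ S m * ((1 - q) / 8))
    by (rewrite pow_add, <- !tech_pow_Rmult; nra).
  apply Rle_trans with (2 * q * (q ^ S m * ((1 - q) / 8)) / (1 - q)).
  - unfold Rdiv; apply Rmult_le_compat_r; [left; apply Rinv_0_lt_compat; lra|].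
    apply Rmult_le_compat_l; lra.
  - replace (2 * q * (q ^ S m * ((1 - q) / 8)) / (1 - q)) with (q * q ^ S m / 4) by (field; lra).
    nra.
Qed.

(* The lower bound is attained at the grid point of level [level b j k] in the window,
   with a step [h] so small that every term up to index [T] contributes [q^(n+1)/2 >= 0]
   while the remaining tail is negligible. *)
Lemma delta2_levy_lower b a j k : (2 <= b)%nat -> 0 < a ->
  exists x h, in_window b j k x /\ in_window b j k (x + 2 * h) /\
    decay b a ^ S (level b j k) / 4 <= Rabs (delta2 (levy b a) x h).
Proof.
  intros Hb Ha; pose proof (decay_bounds b a Hb Ha) as Hq.
  destruct (level_spec b j k ltac:(lia)) as (Hm & Hmj & Hbelow).
  set (q := decay b a) in *; set (m := level b j k) in *.
  destruct (pow_lt_1_zero q ltac:(rewrite Rabs_pos_eq; lra) ((1 - q) / 8) ltac:(lra))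
    as [t Ht].
  specialize (Ht t (le_n t)); rewrite Rabs_pos_eq in Ht by (apply pow_le; lra).
  set (T := (j + S t)%nat).
  destruct (near_grid_point b j k m ltac:(lia) Hmj Hm) as [N HN].
  pose proof (INR_pow_pos b j ltac:(lia)) as HBj.
  set (x := IZR N / INR b ^ m) in *; set (h := / (4 * INR b ^ T)).
  assert (Hh0 : 0 < h)
    by (unfold h; apply Rinv_0_lt_compat; pose proof (INR_pow_pos b T ltac:(lia)); lra).
  assert (Hh : forall n, (n <= T)%nat -> INR b ^ n * h <= / 4)
    by (intros; apply step_scaled_le; lia).
  assert (Hx : in_window b j k x /\ in_window b j k (x + 2 * h)).
  { assert (2 * h < / INR b ^ j).
    { apply (Rmult_lt_reg_l (INR b ^ j)); auto; rewrite Rinv_r by lra.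
      specialize (Hh j ltac:(unfold T; lia)); lra. }
    assert ((IZR k + 2) / INR b ^ j = (IZR k + 1) / INR b ^ j + / INR b ^ j) by (field; lra).
    unfold in_window; lra. }
  exists x, h; split; [apply Hx | split; [apply Hx|]].
  rewrite levy_delta2 by auto; fold q.
  set (an := fun n => delta2 saw (INR b ^ S n * x) (INR b ^ S n * h) * q ^ S n).
  assert (Han : forall n, Rabs (an n) <= 2 * q * q ^ n) by (intros; now apply levy_term_abs_le).
  assert (Hhead : forall n, (n < T)%nat -> an n = if Nat.leb m (S n) then q ^ S n / 2 else 0).
  { intros n Hn; unfold an; destruct (Nat.leb_spec m (S n)).
    - specialize (Hh (S n) ltac:(lia)).
      unfold x; rewrite delta2_saw_grid_point by (auto; lia || lra); field.
    - rewrite (delta2_saw_below_level b j k (S n)); [ring | lia | lia | apply Hbelow; lia | |];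
        apply Hx. }
  rewrite (Series_split an T) by (apply (ex_series_geom_dominated _ (2 * q) q); [lra | auto]).
  pose proof (sumR_head_lower q m T an Hq ltac:(unfold T; lia) ltac:(unfold T; lia) Hhead).
  pose proof (Series_tail_abs_le an (2 * q) q T ltac:(lra) Han) as Htail.
  pose proof (geometric_tail_small q m j t Hq Hmj Ht) as Hsmall; fold T in Hsmall.
  apply Rabs_le_between in Htail; eapply Rle_trans; [|apply Rle_abs]; lra.
Qed.

Lemma Lub_Rbar_between (E : R -> Prop) lo hi :
  (exists z, E z /\ lo <= z) -> (forall z, E z -> z <= hi) -> lo <= real (Lub_Rbar E) <= hi.
Proof.
  intros [z [Ez Hz]] Hhi; destruct (Lub_Rbar_correct E) as [Hub Hleast].
  assert (H1 : Rbar_le z (Lub_Rbar E)) by (apply Hub; auto).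
  assert (H2 : Rbar_le (Lub_Rbar E) hi) by (apply Hleast; intros w Hw; apply Hhi; auto).
  destruct (Lub_Rbar E); simpl in *; try contradiction; lra.
Qed.

Lemma in3lambda_window b j k x : in3lambda b j k x <-> in_window b j (Z.of_nat k) x.
Proof. unfold in3lambda, in_window; now rewrite <- INR_IZR_INZ. Qed.

Lemma osc_levy_bounds b a j k : (2 <= b)%nat -> 0 < a ->
  decay b a ^ S (level b j (Z.of_nat k)) / 4 <= osc (levy b a) b j k
  <= 2 * decay b a ^ level b j (Z.of_nat k) / (1 - decay b a).
Proof.
  intros Hb Ha; apply Lub_Rbar_between.
  - destruct (delta2_levy_lower b a j (Z.of_nat k) Hb Ha) as (x & h & Hx & Hx2 & Hlow).
    exists (Rabs (delta2 (levy b a) x h)); split; auto.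
    exists x, h; now rewrite !in3lambda_window.
  - intros z (x & h & Hx & Hx2 & ->); rewrite in3lambda_window in Hx, Hx2.
    now apply delta2_levy_upper.
Qed.

(* A shift by [c b^-j] moves the window [k] onto the window [k - c]. *)
Lemma osc_levy_shift_bounds b a j k c : (2 <= b)%nat -> 0 < a ->
  decay b a ^ S (level b j (Z.of_nat k - c)) / 4
  <= osc (levy_shift b a (IZR c / INR b ^ j)) b j k
  <= 2 * decay b a ^ level b j (Z.of_nat k - c) / (1 - decay b a).
Proof.
  intros Hb Ha; set (y := IZR c / INR b ^ j).
  assert (Hwin : forall x, in3lambda b j k x <-> in_window b j (Z.of_nat k - c) (x - y)).
  { intros x; rewrite in3lambda_window; unfold in_window, y; rewrite minus_IZR.
    pose proof (INR_pow_pos b j ltac:(lia)).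
    replace ((IZR (Z.of_nat k) - IZR c - 1) / INR b ^ j)
      with ((IZR (Z.of_nat k) - 1) / INR b ^ j - IZR c / INR b ^ j) by (field; lra).
    replace ((IZR (Z.of_nat k) - IZR c + 2) / INR b ^ j)
      with ((IZR (Z.of_nat k) + 2) / INR b ^ j - IZR c / INR b ^ j) by (field; lra).
    lra. }
  assert (Hdelta : forall x h, delta2 (levy_shift b a y) x h = delta2 (levy b a) (x - y) h).
  { intros x h; unfold delta2, levy_shift.
    replace (x + 2 * h - y) with (x - y + 2 * h) by ring.
    now replace (x + h - y) with (x - y + h) by ring. }
  apply Lub_Rbar_between.
  - destruct (delta2_levy_lower b a j (Z.of_nat k - c) Hb Ha) as (x & h & Hx & Hx2 & Hlow).
    exists (Rabs (delta2 (levy b a) x h)); split; auto.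
    exists (x + y), h; rewrite !Hwin, Hdelta.
    replace (x + y - y) with x by ring.
    now replace (x + y + 2 * h - y) with (x + 2 * h) by ring.
  - intros z (x & h & Hx & Hx2 & ->); rewrite Hwin in Hx, Hx2; rewrite Hdelta.
    apply delta2_levy_upper; auto.
    now replace (x - y + 2 * h) with (x + 2 * h - y) by ring.
Qed.

(** * The structure function *)

Definition weight (b : nat) (s : R) (m : nat) : R := exp (- (ln (INR b) * s * INR m)).

Lemma linear_le_Rmax l t i j : 0 < l -> (i <= j)%nat -> l * t * INR i <= Rmax 0 (l * t * INR j).
Proof.
  intros Hl Hij; apply le_INR in Hij; pose proof (pos_INR i).
  destruct (Rle_dec 0 t).
  - eapply Rle_trans; [|apply Rmax_r]; apply Rmult_le_compat_l; [apply Rmult_le_pos|]; lra.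
  - eapply Rle_trans; [|apply Rmax_l].
    assert (0 <= l * - t * INR i) by (repeat apply Rmult_le_pos; lra); lra.
Qed.

Lemma weight_level_le_sum b j s k : (1 <= b)%nat ->
  weight b s (level b j k) <= sumR (fun i => indicator (near_grid b j k i) * weight b s i) (S j).
Proof.
  intros Hb; destruct (level_spec b j k Hb) as (Hm & Hmj & _).
  eapply Rle_trans; [|apply (sumR_term_le _ _ (level b j k)); [|lia]].
  - cbv beta; rewrite Hm; simpl; lra.
  - intros i _; apply Rmult_le_pos; [apply indicator_nonneg | left; apply exp_pos].
Qed.

Lemma sum_weight_upper b j s : (2 <= b)%nat ->
  sumR (fun k => weight b s (level b j (Z.of_nat k))) (b ^ j)
  <= 3 * (INR j + 1) * exp (Rmax 0 (ln (INR b) * (1 - s) * INR j)).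
Proof.
  intros Hb; pose proof (ln_INR_pos b Hb) as Hl.
  eapply Rle_trans; [apply sumR_le; intros k _; apply weight_level_le_sum; lia|].
  rewrite sumR_comm.
  replace (3 * (INR j + 1)) with (INR (S j) * 3) by (rewrite S_INR; ring).
  rewrite Rmult_assoc, <- sumR_const; apply sumR_le; intros i Hi.
  rewrite (sumR_ext _ (fun k => weight b s i * indicator (near_grid b j (Z.of_nat k) i)))
    by (intros; ring).
  rewrite sumR_scal_l.
  eapply Rle_trans.
  - apply Rmult_le_compat_l; [left; apply exp_pos | apply count_near_grid; auto; lia].
  - rewrite INR_pow_exp by auto; unfold weight.
    assert (E : exp (- (ln (INR b) * s * INR i)) * exp (ln (INR b) * INR i)
                = exp (ln (INR b) * (1 - s) * INR i)) by (rewrite <- exp_plus; f_equal; ring).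
    apply Rle_trans with (3 * exp (ln (INR b) * (1 - s) * INR i)); [rewrite <- E; right; ring|].
    apply Rmult_le_compat_l; [lra|]; apply exp_le, linear_le_Rmax; auto; lia.
Qed.

Lemma sum_weight_ge_1 b j s : (2 <= b)%nat ->
  1 <= sumR (fun k => weight b s (level b j (Z.of_nat k))) (b ^ j).
Proof.
  intros Hb; eapply Rle_trans; [|apply (sumR_term_le _ _ 0)].
  - unfold weight; simpl Z.of_nat; rewrite level_0 by lia; simpl.
    rewrite Rmult_0_r, Ropp_0, exp_0; lra.
  - intros; left; apply exp_pos.
  - pose proof (Nat.pow_nonzero b j); lia.
Qed.

(* For [s >= 0], every level is at most [j]. *)
Lemma sum_weight_lower_nonneg b j s : (2 <= b)%nat -> 0 <= s ->
  exp (ln (INR b) * (1 - s) * INR j) <= sumR (fun k => weight b s (level b j (Z.of_nat k))) (b ^ j).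
Proof.
  intros Hb Hs; pose proof (ln_INR_pos b Hb) as Hl.
  apply Rle_trans with (sumR (fun _ => weight b s j) (b ^ j)).
  - rewrite sumR_const, INR_pow_exp by auto; unfold weight; rewrite <- exp_plus.
    apply exp_le; lra.
  - apply sumR_le; intros k _; unfold weight; apply exp_le, Ropp_le_contravar.
    destruct (level_spec b j (Z.of_nat k) ltac:(lia)) as (_ & Hmj & _).
    apply le_INR in Hmj; assert (0 <= ln (INR b) * s) by nra; nra.
Qed.

(* For [s < 0], a fraction [b^-2] of the indices have level at least [j - 1]. *)
Lemma sum_weight_lower_neg b j s : (2 <= b)%nat -> (2 <= j)%nat -> s < 0 ->
  exp (ln (INR b) * s - 2 * ln (INR b)) * exp (ln (INR b) * (1 - s) * INR j)
  <= sumR (fun k => weight b s (level b j (Z.of_nat k))) (b ^ j).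
Proof.
  intros Hb Hj Hs; pose proof (ln_INR_pos b Hb) as Hl.
  replace (b ^ j)%nat with (b ^ (j - 2) * b ^ 2)%nat
    by (rewrite <- Nat.pow_add_r; f_equal; lia).
  rewrite sumR_blocks.
  apply Rle_trans with (sumR (fun _ => weight b s (j - 1)) (b ^ (j - 2))).
  - rewrite sumR_const, INR_pow_exp by auto; unfold weight.
    rewrite <- !exp_plus, !minus_INR by lia; simpl INR; apply exp_le; lra.
  - apply sumR_le; intros u Hu.
    eapply Rle_trans; [|apply (sumR_term_le _ _ 2)].
    + unfold weight; apply exp_le, Ropp_le_contravar.
      rewrite Nat.mul_comm; pose proof (level_large b j u Hb Hj Hu) as Hlev.
      apply le_INR in Hlev; assert (ln (INR b) * s <= 0) by nra; nra.
    + intros; left; apply exp_pos.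
    + assert (4 <= b ^ 2)%nat by (simpl; nia); lia.
Qed.

Lemma sum_weight_lower b j s : (2 <= b)%nat -> (2 <= j)%nat ->
  Rmin 1 (exp (ln (INR b) * s - 2 * ln (INR b))) * exp (Rmax 0 (ln (INR b) * (1 - s) * INR j))
  <= sumR (fun k => weight b s (level b j (Z.of_nat k))) (b ^ j).
Proof.
  intros Hb Hj; pose proof (ln_INR_pos b Hb) as Hl.
  pose proof (Rmin_l 1 (exp (ln (INR b) * s - 2 * ln (INR b)))).
  pose proof (Rmin_r 1 (exp (ln (INR b) * s - 2 * ln (INR b)))).
  assert (0 < Rmin 1 (exp (ln (INR b) * s - 2 * ln (INR b))))
    by (apply Rmin_glb_lt; [lra | apply exp_pos]).
  unfold Rmax; destruct Rle_dec as [Hpos | Hneg].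
  - pose proof (exp_pos (ln (INR b) * (1 - s) * INR j)).
    destruct (Rle_dec 0 s).
    + pose proof (sum_weight_lower_nonneg b j s Hb r); nra.
    + pose proof (sum_weight_lower_neg b j s Hb Hj ltac:(lra)); nra.
  - rewrite exp_0; pose proof (sum_weight_ge_1 b j s Hb); lra.
Qed.

Definition osc_log_const (q : R) : R := Rabs (ln q) + ln 4 + Rabs (ln (2 / (1 - q))).

Lemma ln_osc_close q m d : 0 < q < 1 -> q ^ S m / 4 <= d <= 2 * q ^ m / (1 - q) ->
  0 < d /\ Rabs (ln d - INR m * ln q) <= osc_log_const q.
Proof.
  intros Hq [H1 H2]; pose proof (pow_lt q m ltac:(lra)).
  assert (Hlo : 0 < q ^ S m / 4) by (apply Rdiv_lt_0_compat; [apply pow_lt|]; lra).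
  assert (Hd : 0 < d) by lra; split; [auto|].
  apply ln_le in H1; [|auto]; apply ln_le in H2; [|auto].
  rewrite ln_div, ln_pow, S_INR in H1 by (try apply pow_lt; lra).
  replace (2 * q ^ m / (1 - q)) with (q ^ m * (2 / (1 - q))) in H2 by (field; lra).
  rewrite ln_mult, ln_pow in H2 by (try apply Rdiv_lt_0_compat; lra).
  assert (0 <= ln 4) by (rewrite <- ln_1; apply ln_le; lra).
  unfold osc_log_const; pose proof (Rle_abs (ln q)); pose proof (Rle_abs (- ln q)).
  pose proof (Rle_abs (ln (2 / (1 - q)))); pose proof (Rle_abs (- ln (2 / (1 - q)))).
  rewrite Rabs_Ropp in *; apply Rabs_le; lra.
Qed.

Definition prod_log_const (b : nat) (a1 a2 r1 r2 : R) (m0 : nat) : R :=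
  Rabs r1 * osc_log_const (decay b a1) + Rabs r2 * osc_log_const (decay b a2)
  + Rabs r2 * a2 * ln (INR b) * INR m0.

Definition osc_product (b : nat) (a1 a2 y r1 r2 : R) (j k : nat) : R :=
  Rpower (osc (levy b a1) b j k) r1 * Rpower (osc (levy_shift b a2 y) b j k) r2.

Section OscProduct.

Variables (b : nat) (a1 a2 r1 r2 : R).
Hypotheses (Hb : (2 <= b)%nat) (Ha1 : 0 < a1) (Ha2 : 0 < a2).

Lemma ln_osc_product_close d1 d2 m1 m2 m0 :
  decay b a1 ^ S m1 / 4 <= d1 <= 2 * decay b a1 ^ m1 / (1 - decay b a1) ->
  decay b a2 ^ S m2 / 4 <= d2 <= 2 * decay b a2 ^ m2 / (1 - decay b a2) ->
  (m1 <= m2 + m0)%nat -> (m2 <= m1 + m0)%nat ->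
  0 < d1 /\ 0 < d2 /\
  Rabs (r1 * ln d1 + r2 * ln d2 + ln (INR b) * (a1 * r1 + a2 * r2) * INR m1)
  <= prod_log_const b a1 a2 r1 r2 m0.
Proof.
  intros D1 D2 Hm1 Hm2.
  destruct (ln_osc_close _ m1 d1 (decay_bounds b a1 Hb Ha1) D1) as [P1 B1].
  destruct (ln_osc_close _ m2 d2 (decay_bounds b a2 Hb Ha2) D2) as [P2 B2].
  repeat split; auto; rewrite !ln_decay in *; set (l := ln (INR b)) in *.
  assert (Hl : 0 < l) by now apply ln_INR_pos.
  set (e1 := ln d1 - INR m1 * (- a1 * l)) in *; set (e2 := ln d2 - INR m2 * (- a2 * l)) in *.
  assert (Hdm : Rabs (INR m2 - INR m1) <= INR m0).
  { apply le_INR in Hm1, Hm2; rewrite plus_INR in Hm1, Hm2; apply Rabs_le; lra. }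
  replace (r1 * ln d1 + r2 * ln d2 + l * (a1 * r1 + a2 * r2) * INR m1)
    with (r1 * e1 + r2 * e2 + r2 * a2 * l * (INR m1 - INR m2)) by (unfold e1, e2; ring).
  eapply Rle_trans; [apply Rabs_triang|]; eapply Rle_trans; [apply Rplus_le_compat_r, Rabs_triang|].
  rewrite !Rabs_mult, (Rabs_pos_eq a2), (Rabs_pos_eq l), Rabs_minus_sym by lra.
  unfold prod_log_const; fold l.
  pose proof (Rabs_pos r1); pose proof (Rabs_pos r2).
  apply Rplus_le_compat; [apply Rplus_le_compat|]; apply Rmult_le_compat_l; auto.
  repeat apply Rmult_le_pos; lra.
Qed.

Lemma osc_product_bounds j m0 c k : (m0 <= j)%nat -> (Z.of_nat (b ^ (j - m0)) | c)%Z ->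
  exp (- prod_log_const b a1 a2 r1 r2 m0) * weight b (a1 * r1 + a2 * r2) (level b j (Z.of_nat k))
  <= osc_product b a1 a2 (IZR c / INR b ^ j) r1 r2 j k
  <= exp (prod_log_const b a1 a2 r1 r2 m0) * weight b (a1 * r1 + a2 * r2) (level b j (Z.of_nat k)).
Proof.
  intros Hm0 Hc.
  destruct (level_translate b j m0 (Z.of_nat k) c ltac:(lia) Hm0 Hc) as [Hm1 Hm2].
  destruct (ln_osc_product_close _ _ _ _ m0 (osc_levy_bounds b a1 j k Hb Ha1)
              (osc_levy_shift_bounds b a2 j k c Hb Ha2) Hm1 Hm2) as (P1 & P2 & Hclose).
  unfold osc_product, Rpower, weight; rewrite <- !exp_plus.
  apply Rabs_le_between in Hclose; split; apply exp_le; lra.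
Qed.

Lemma sum_osc_product_bounds j m0 c : (m0 <= j)%nat -> (2 <= j)%nat ->
  (Z.of_nat (b ^ (j - m0)) | c)%Z ->
  let s := a1 * r1 + a2 * r2 in
  let M := Rmax 0 (ln (INR b) * (1 - s) * INR j) in
  exp (- prod_log_const b a1 a2 r1 r2 m0) * Rmin 1 (exp (ln (INR b) * s - 2 * ln (INR b)))
    * exp M
  <= sumR (osc_product b a1 a2 (IZR c / INR b ^ j) r1 r2 j) (b ^ j)
  <= exp (prod_log_const b a1 a2 r1 r2 m0) * (3 * (INR j + 1)) * exp M.
Proof.
  intros Hm0 Hj Hc s M.
  pose proof (fun k => osc_product_bounds j m0 c k Hm0 Hc) as Hk.
  pose proof (exp_pos (prod_log_const b a1 a2 r1 r2 m0)).
  pose proof (exp_pos (- prod_log_const b a1 a2 r1 r2 m0)).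
  split.
  - eapply Rle_trans; [|apply sumR_le; intros k _; apply Hk].
    rewrite sumR_scal_l, Rmult_assoc; apply Rmult_le_compat_l; [lra|].
    now apply sum_weight_lower.
  - eapply Rle_trans; [apply sumR_le; intros k _; apply Hk|].
    rewrite sumR_scal_l, Rmult_assoc; apply Rmult_le_compat_l; [lra|].
    now apply sum_weight_upper.
Qed.

End OscProduct.

Lemma ln_sandwich A B M X : 0 < A -> A * exp M <= X <= B * exp M ->
  Rabs (ln X - M) <= Rabs (ln A) + Rabs (ln B).
Proof.
  intros HA [H1 H2]; pose proof (exp_pos M).
  assert (HAM : 0 < A * exp M) by now apply Rmult_lt_0_compat.
  assert (HX : 0 < X) by lra.
  assert (HB : 0 < B) by (apply (Rmult_lt_reg_r (exp M)); lra).
  apply ln_le in H1; [|auto]; apply ln_le in H2; [|auto].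
  rewrite ln_mult, ln_exp in H1 by auto.
  rewrite ln_mult, ln_exp in H2 by auto.
  pose proof (Rle_abs (ln B)); pose proof (Rle_abs (- ln A)); rewrite Rabs_Ropp in *.
  pose proof (Rabs_pos (ln A)); pose proof (Rabs_pos (ln B)); apply Rabs_le; lra.
Qed.

Lemma is_lim_seq_ln_over_linear C :
  is_lim_seq (fun j => (C + ln (INR j + 1)) / (INR j + 1)) 0.
Proof.
  assert (U : is_lim_seq (fun j => INR j + 1) p_infty).
  { apply (is_lim_seq_ext (fun j => INR (S j))); [intros; apply S_INR|].
    apply (is_lim_seq_incr_1 INR p_infty), is_lim_seq_INR. }
  assert (V1 : is_lim_seq (fun j => / (INR j + 1)) 0)
    by (apply (is_lim_seq_inv _ p_infty) in U; [exact U | discriminate]).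
  assert (V2 : is_lim_seq (fun j => ln (INR j + 1) / (INR j + 1)) 0).
  { apply (is_lim_comp_seq (fun y => ln y / y) _ p_infty 0); auto.
    - apply is_lim_div_ln_p.
    - exists O; intros; discriminate. }
  pose proof (is_lim_seq_plus' _ _ _ _ (is_lim_seq_scal_l _ C _ V1) V2) as V.
  replace (Finite 0) with (Finite (C * 0 + 0)) by (f_equal; ring).
  eapply is_lim_seq_ext; [|exact V]; intros j; simpl.
  pose proof (pos_INR j); field; lra.
Qed.

Lemma ln_ratio_deviation b j X r : (2 <= b)%nat -> (1 <= j)%nat -> 0 < X ->
  Rabs (ln (/ INR b ^ j * X) / ln (/ INR b ^ j) - (1 - r))
  = Rabs (ln X - ln (INR b) * INR j * r) / (ln (INR b) * INR j).
Proof.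
  intros Hb Hj HX; pose proof (ln_INR_pos b Hb); pose proof (INR_pow_pos b j ltac:(lia)).
  assert (1 <= INR j) by (replace 1 with (INR 1) by auto; apply le_INR; lia).
  rewrite ln_mult, ln_Rinv, ln_pow by (try apply Rinv_0_lt_compat; lra || (apply lt_0_INR; lia)).
  replace ((- (INR j * ln (INR b)) + ln X) / - (INR j * ln (INR b)) - (1 - r))
    with (- (ln X - ln (INR b) * INR j * r) / (ln (INR b) * INR j)) by (field; nra).
  unfold Rdiv; rewrite Rabs_mult, Rabs_Ropp, Rabs_inv, (Rabs_pos_eq (_ * INR j)) by nra; auto.
Qed.

Lemma scaling_ratio_close b a1 a2 r1 r2 m0 Y : (2 <= b)%nat -> 0 < a1 -> 0 < a2 ->
  exists C, forall j, (m0 <= j)%nat -> (2 <= j)%nat ->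
    Rabs (ln (struct_fun b a1 a2 (IZR Y / INR b ^ m0) r1 r2 j) / ln (/ INR b ^ j)
          - (1 - Rmax 0 (1 - (a1 * r1 + a2 * r2))))
    <= 2 / ln (INR b) * ((C + ln (INR j + 1)) / (INR j + 1)).
Proof.
  intros Hb Ha1 Ha2; pose proof (ln_INR_pos b Hb) as Hl.
  set (l := ln (INR b)) in *; set (s := a1 * r1 + a2 * r2).
  set (K := prod_log_const b a1 a2 r1 r2 m0); set (c1 := Rmin 1 (exp (l * s - 2 * l))).
  exists (Rabs (ln (exp (- K) * c1)) + Rabs K + ln 3); intros j Hm0 Hj.
  set (c := (Y * Z.of_nat (b ^ (j - m0)))%Z).
  assert (Hy : IZR Y / INR b ^ m0 = IZR c / INR b ^ j) by (apply grid_refine; lia).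
  destruct (sum_osc_product_bounds b a1 a2 r1 r2 Hb Ha1 Ha2 j m0 c Hm0 Hj
              ltac:(apply Z.divide_factor_r)) as [Hlo Hhi].
  fold l s K c1 in Hlo, Hhi.
  set (M := Rmax 0 (l * (1 - s) * INR j)) in *.
  set (X := sumR (osc_product b a1 a2 (IZR c / INR b ^ j) r1 r2 j) (b ^ j)) in *.
  assert (Hc1 : 0 < c1) by (apply Rmin_glb_lt; [lra | apply exp_pos]).
  pose proof (exp_pos K); pose proof (exp_pos (- K)).
  assert (HJ : 1 <= INR j) by (replace 1 with (INR 1) by auto; apply le_INR; lia).
  assert (Hln3 : 0 <= ln 3) by (rewrite <- ln_1; apply ln_le; lra).
  assert (Hlnj : 0 <= ln (INR j + 1)) by (rewrite <- ln_1; apply ln_le; lra).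
  assert (Herr : Rabs (ln X - M) <= Rabs (ln (exp (- K) * c1)) + Rabs K + ln 3 + ln (INR j + 1)).
  { eapply Rle_trans.
    { apply (ln_sandwich (exp (- K) * c1) (exp K * (3 * (INR j + 1))) M X); [|split; auto].
      now apply Rmult_lt_0_compat. }
    rewrite (ln_mult (exp K)), (ln_mult 3), ln_exp by lra.
    pose proof (Rabs_triang K (ln 3 + ln (INR j + 1))).
    pose proof (Rabs_triang (ln 3) (ln (INR j + 1))).
    rewrite (Rabs_pos_eq (ln 3)), (Rabs_pos_eq (ln (INR j + 1))) in * by lra; lra. }
  set (C := Rabs (ln (exp (- K) * c1)) + Rabs K + ln 3) in *.
  assert (HX : 0 < X) by (apply Rlt_le_trans with (2 := Hlo); repeat apply Rmult_lt_0_compat;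
                          auto; apply exp_pos).
  unfold struct_fun; rewrite sum_n_sumR, Hy by (pose proof (Nat.pow_nonzero b j); lia).
  change (sumR _ (b ^ j)) with X.
  rewrite ln_ratio_deviation by (auto; lia); fold l.
  replace (l * INR j * Rmax 0 (1 - s)) with M
    by (unfold M; rewrite <- RmaxRmult by (apply Rmult_le_pos; lra); f_equal; ring).
  unfold Rdiv; pose proof (Rabs_pos (ln X - M)).
  apply Rle_trans with ((C + ln (INR j + 1)) * (2 / l * / (INR j + 1))).
  - apply Rmult_le_compat; auto; [left; apply Rinv_0_lt_compat; nra|].
    apply (Rmult_le_reg_l (l * INR j * (INR j + 1))); [nra|]; field_simplify; lra.
  - unfold Rdiv; right; ring.
Qed.

Theorem mainTheorem4 (b : nat) (a1 a2 y : R) :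
  (2 <= b)%nat -> 0 < a1 -> 0 < a2 ->
  0 <= y < 1 -> b_adic b y ->
  forall r1 r2 : R,
    scaling_fun b a1 a2 y r1 r2 =
    Finite (if Rle_dec 0 (1 - a1 * r1 - a2 * r2) then a1 * r1 + a2 * r2 else 1).
Proof.
  intros Hb Ha1 Ha2 _ [m0 [Y ->]] r1 r2.
  set (zeta := if Rle_dec 0 (1 - a1 * r1 - a2 * r2) then a1 * r1 + a2 * r2 else 1).
  assert (Hzeta : zeta = 1 - Rmax 0 (1 - (a1 * r1 + a2 * r2))).
  { unfold zeta, Rmax; destruct (Rle_dec 0 (1 - a1 * r1 - a2 * r2)), Rle_dec; lra. }
  destruct (scaling_ratio_close b a1 a2 r1 r2 m0 Y Hb Ha1 Ha2) as [C HC].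
  set (err := fun j => 2 / ln (INR b) * ((C + ln (INR j + 1)) / (INR j + 1))).
  assert (Herr : is_lim_seq err 0).
  { pose proof (is_lim_seq_scal_l _ (2 / ln (INR b)) _ (is_lim_seq_ln_over_linear C)) as H.
    simpl in H; now rewrite Rmult_0_r in H. }
  unfold scaling_fun; apply is_LimInf_seq_unique, is_lim_LimInf_seq.
  apply (is_lim_seq_le_le_loc (fun j => zeta - err j) _ (fun j => zeta + err j)).
  - exists (Nat.max m0 2); intros j Hj.
    specialize (HC j ltac:(lia) ltac:(lia)); rewrite <- Hzeta in HC.
    apply Rabs_le_between in HC; unfold err; lra.
  - replace (Finite zeta) with (Finite (zeta - 0)) by (f_equal; ring).
    apply is_lim_seq_minus'; [apply is_lim_seq_const | auto].
  - replace (Finite zeta) with (Finite (zeta + 0)) by (f_equal; ring).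
    apply is_lim_seq_plus'; [apply is_lim_seq_const | auto].
Qed.
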